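(* Let $\alpha\neq 0$ and let $\Sigma_1$ and $\Sigma_2$ be two $\alpha$-singular maximal surfaces. If $\Sigma_1$ and $\Sigma_2$ have a common tangent interior point $p$ and $\Sigma_1$ lies above $\Sigma_2$ around $p$, then $\Sigma_1$ and $\Sigma_2$ coincide in an open set around $p$.
   Context: $\mathbb L^3$ is $\mathbb R^3$ with the metric $dx^2+dy^2-dz^2$. An $\alpha$-singular maximal surface is a spacelike surface (Riemannian induced metric, timelike unit normal $N$) in the halfspace $z>0$ satisfying $H(p)=-\alpha\frac{\langle N(p),(0,0,1)\rangle}{z}$, where $H$ is the trace of the second fundamental form; locally it is a graph $z=u(x,y)$ with $|Du|<1$ solving $\mathrm{div}\frac{Du}{\sqrt{1-|Du|^2}}=\frac{\alpha}{u\sqrt{1-|Du|^2}}$. ''Above'' refers to the $z$-direction. *)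

From Stdlib Require Import Reals.
From Coquelicot Require Import Coquelicot.
Open Scope R_scope.

Definition px (f : R -> R -> R) (x y : R) : R := Derive (fun t => f t y) x.
Definition py (f : R -> R -> R) (x y : R) : R := Derive (fun t => f x t) y.

Definition cont2 (f : R -> R -> R) (x y : R) : Prop :=
  continuous (fun q : R * R => f (fst q) (snd q)) (x, y).

Definition C2_on (U : R * R -> Prop) (u : R -> R -> R) : Prop :=
  forall x y, U (x, y) ->
    ex_derive (fun t => u t y) x /\ ex_derive (fun t => u x t) y /\
    ex_derive (fun t => px u t y) x /\ ex_derive (fun t => px u x t) y /\
    ex_derive (fun t => py u t y) x /\ ex_derive (fun t => py u x t) y /\
    cont2 u x y /\ cont2 (px u) x y /\ cont2 (py u) x y /\
    cont2 (px (px u)) x y /\ cont2 (py (px u)) x y /\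
    cont2 (px (py u)) x y /\ cont2 (py (py u)) x y.

Definition Wf (u : R -> R -> R) (x y : R) : R :=
  sqrt (1 - (px u x y) ^ 2 - (py u x y) ^ 2).

(* The surface z = u(x,y), (x,y) in the open set U, is an alpha-singular
   maximal surface: it lies in z > 0, is spacelike (|Du| < 1), and
   div( Du / sqrt(1-|Du|^2) ) = alpha / (u sqrt(1-|Du|^2)). *)
Definition alpha_singular_maximal_graph (alpha : R) (U : R * R -> Prop)
  (u : R -> R -> R) : Prop :=
  open U /\ C2_on U u /\
  forall x y, U (x, y) ->
    0 < u x y /\
    (px u x y) ^ 2 + (py u x y) ^ 2 < 1 /\
    px (fun a b => px u a b / Wf u a b) x y
      + py (fun a b => py u a b / Wf u a b) x y
      = alpha / (u x y * Wf u x y).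

From Stdlib Require Import Reals Lra Psatz ClassicalEpsilon.
From Coquelicot Require Import Coquelicot.
Open Scope R_scope.

(** Write w = u1 - u2, so that w >= 0 near p, w(p) = 0 and Dw(p) = 0. If w(z) > 0 at a
    point z close to p, Hopf's argument on the disc centred at z whose boundary passes
    through p gives a contradiction. Let m = w(z)/2 and
    h = exp(-g |x - z|^2) - exp(-g |p - z|^2), which vanishes on that circle, and minimise
    w - m h on a square containing the disc. A negative minimum is attained inside the
    disc and away from z; there the first-order conditions make Du1 and Du2 differ by
    O(m g), so subtracting the two equations in non-divergence form leaves an error of
    order m g, while the elliptic operator at Du1 applied to m h is of order m g^2:
    impossible for g large. Otherwise w - m h >= 0 = (w - m h)(p), so its derivative at p
    towards z is nonnegative, whereas Dw(p) = 0 and that derivative of -m h is negative. *)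

Lemma is_derive_small_o (f : R -> R) (x l : R) (eps : posreal) :
  is_derive f x l ->
  locally x (fun y => Rabs (f y - f x - l * (y - x)) <= eps * Rabs (y - x)).
Proof.
  intros [_ Hf]. specialize (Hf x (fun P HP => HP) eps).
  revert Hf. apply filter_imp. intros y H.
  replace (f y - f x - l * (y - x)) with (f y + - f x + - ((y + - x) * l)) by ring.
  exact H.
Qed.

Lemma is_derive_right_min_ge0 (phi : R -> R) (x L : R) :
  is_derive phi x L -> at_right x (fun t => phi x <= phi t) -> 0 <= L.
Proof.
  intros Hd Hmin. destruct (Rle_lt_dec 0 L) as [|HL]; [assumption|exfalso].
  assert (He : 0 < - L / 2) by lra.
  assert (Hr : at_right x (fun t => x < t /\ phi x <= phi t /\
      Rabs (phi t - phi x - L * (t - x)) <= - L / 2 * Rabs (t - x))).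
  { repeat apply filter_and.
    - unfold at_right, within. apply filter_forall. now intros t Ht.
    - exact Hmin.
    - apply (filter_imp _ _ (fun t H _ => H)), (is_derive_small_o _ _ _ (mkposreal _ He) Hd). }
  destruct (Hierarchy.filter_ex _ Hr) as [t [Ht [Hm Ho]]].
  rewrite (Rabs_pos_eq (t - x)) in Ho by lra.
  pose proof (Rle_abs (phi t - phi x - L * (t - x))). nra.
Qed.

Lemma is_derive_local_min (phi : R -> R) (x L : R) :
  is_derive phi x L -> locally x (fun t => phi x <= phi t) -> L = 0.
Proof.
  intros Hd Hmin.
  assert (Hright : 0 <= L).
  { apply (is_derive_right_min_ge0 phi x); [exact Hd|].
    exact (filter_imp _ _ (fun t H _ => H) Hmin). }
  assert (Hleft : 0 <= - L).
  { apply (is_derive_right_min_ge0 (fun t => phi (- t)) (- x)).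
    - replace (- L) with (scal (-1) L) by (unfold scal; simpl; unfold mult; simpl; ring).
      apply (is_derive_comp phi Ropp); [now rewrite Ropp_involutive|].
      auto_derive; [exact I | ring].
    - rewrite Ropp_involutive.
      assert (Hopp := filterlim_opp (-x)). unfold opp in Hopp; simpl in Hopp.
      rewrite Ropp_involutive in Hopp.
      unfold at_right, within.
      apply (filter_imp (fun t => phi x <= phi (- t))); [now intros|].
      exact (Hopp _ Hmin). }
  lra.
Qed.

Lemma is_derive_local_min_second (phi psi : R -> R) (x S : R) :
  locally x (fun t => is_derive phi t (psi t)) ->
  locally x (fun t => phi x <= phi t) ->
  is_derive psi x S -> psi x = 0 /\ 0 <= S.
Proof.
  intros Hd Hmin HS.
  assert (Hpsi : psi x = 0).
  { apply (is_derive_local_min phi x); [exact (locally_singleton _ _ Hd) | exact Hmin]. }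
  split; [exact Hpsi|].
  destruct (Rle_lt_dec 0 S) as [|HSneg]; [assumption|exfalso].
  assert (He : 0 < - S / 2) by lra.
  destruct (filter_and _ _ Hd (filter_and _ _ Hmin (is_derive_small_o psi x S (mkposreal _ He) HS)))
    as [d Hball].
  assert (Hd2 : 0 < d / 2) by (generalize (cond_pos d); lra).
  assert (Hin : forall c, x <= c <= x + d / 2 -> ball x d c).
  { intros c Hc. change (Rabs (c - x) < d). rewrite Rabs_pos_eq; lra. }
  destruct (MVT_cor2 phi psi x (x + d / 2)) as [c [Hmvt Hc]]; [lra| |].
  { intros c Hc. apply is_derive_Reals, (Hball c (Hin c Hc)). }
  assert (Hneg : psi c < 0).
  { destruct (Hball c (Hin c ltac:(lra))) as [_ [_ Ho]]. simpl in Ho.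
    rewrite Hpsi, (Rabs_pos_eq (c - x)) in Ho by lra.
    pose proof (Rle_abs (psi c - 0 - S * (c - x))). nra. }
  assert (Hend : x <= x + d / 2 <= x + d / 2) by lra.
  destruct (Hball (x + d / 2) (Hin (x + d / 2) Hend)) as [_ [Hm _]].
  nra.
Qed.

(** * Derivatives along lines *)

(* [G a b] and [H a b] are the first and second derivatives of [F] at [(x, y)]
   along the line through [(x, y)] with direction [(a, b)]. *)
Definition is_jet2 (F : R -> R -> R) (x y : R) (G H : R -> R -> R) : Prop :=
  forall a b, exists psi : R -> R,
    locally 0 (fun t => is_derive (fun s => F (x + s * a) (y + s * b)) t (psi t)) /\
    psi 0 = G a b /\ is_derive psi 0 (H a b).

Lemma is_jet2_minus (F1 F2 : R -> R -> R) (x y : R) (G1 G2 H1 H2 : R -> R -> R) :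
  is_jet2 F1 x y G1 H1 -> is_jet2 F2 x y G2 H2 ->
  is_jet2 (fun u v => F1 u v - F2 u v) x y
    (fun a b => G1 a b - G2 a b) (fun a b => H1 a b - H2 a b).
Proof.
  intros J1 J2 a b.
  destruct (J1 a b) as [psi1 [D1 [E1 S1]]], (J2 a b) as [psi2 [D2 [E2 S2]]].
  exists (fun t => psi1 t - psi2 t). split; [|split].
  - refine (filter_imp _ _ _ (filter_and _ _ D1 D2)).
    intros t [Ht1 Ht2]. exact (is_derive_minus _ _ _ _ _ Ht1 Ht2).
  - now rewrite E1, E2.
  - exact (is_derive_minus _ _ _ _ _ S1 S2).
Qed.

Lemma is_jet2_scal (F : R -> R -> R) (c x y : R) (G H : R -> R -> R) :
  is_jet2 F x y G H ->
  is_jet2 (fun u v => c * F u v) x y (fun a b => c * G a b) (fun a b => c * H a b).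
Proof.
  intros J a b. destruct (J a b) as [psi [D [E S]]].
  exists (fun t => c * psi t). split; [|split].
  - refine (filter_imp _ _ _ D). intros t Ht. exact (is_derive_scal _ _ _ _ Ht).
  - now rewrite E.
  - exact (is_derive_scal _ _ _ _ S).
Qed.

Lemma locally_2d_line (P : R -> R -> Prop) (x y a b : R) :
  locally_2d P x y -> locally 0 (fun t => P (x + t * a) (y + t * b)).
Proof.
  intros [d Hd].
  assert (Hk : 0 < Rabs a + Rabs b + 1) by (generalize (Rabs_pos a) (Rabs_pos b); lra).
  exists (mkposreal _ (Rdiv_lt_0_compat _ _ (cond_pos d) Hk)). intros t Ht.
  change (Rabs (t - 0) < d / (Rabs a + Rabs b + 1)) in Ht.
  rewrite Rminus_0_r in Ht.
  apply Rmult_lt_compat_r with (r := Rabs a + Rabs b + 1) in Ht; [|exact Hk].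
  unfold Rdiv in Ht. rewrite Rmult_assoc, Rinv_l, Rmult_1_r in Ht by lra.
  generalize (Rabs_pos t) (Rabs_pos a) (Rabs_pos b); intros.
  apply Hd; [replace (x + t * a - x) with (t * a) by ring
            | replace (y + t * b - y) with (t * b) by ring]; rewrite Rabs_mult; nra.
Qed.

Lemma is_jet2_local_min (F : R -> R -> R) (x y : R) (G H : R -> R -> R) :
  is_jet2 F x y G H -> locally_2d (fun u v => F x y <= F u v) x y ->
  forall a b, G a b = 0 /\ 0 <= H a b.
Proof.
  intros J Hmin a b. destruct (J a b) as [psi [D [E S]]].
  assert (Hline : locally 0 (fun t => F (x + 0 * a) (y + 0 * b) <= F (x + t * a) (y + t * b))).
  { rewrite !Rmult_0_l, !Rplus_0_r. exact (locally_2d_line _ _ _ a b Hmin). }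
  destruct (is_derive_local_min_second _ psi 0 (H a b) D Hline S) as [Hpsi HS].
  split; [now rewrite <- E|exact HS].
Qed.

Definition qform (a11 a12 a21 a22 a b : R) : R :=
  (a11 * a + a12 * b) * a + (a21 * a + a22 * b) * b.

Definition dform (u : R -> R -> R) (x y a b : R) : R := px u x y * a + py u x y * b.

Definition hess (u : R -> R -> R) (x y : R) : R -> R -> R :=
  qform (px (px u) x y) (py (px u) x y) (px (py u) x y) (py (py u) x y).

Lemma open_locally_2d (U : R * R -> Prop) (x y : R) :
  open U -> U (x, y) -> locally_2d (fun a b => U (a, b)) x y.
Proof.
  intros HU Hxy. apply locally_2d_locally.
  refine (filter_imp _ _ _ (HU _ Hxy)). now intros [a b].
Qed.

Lemma differentiable_pt_lim_partials (f : R -> R -> R) (x y : R) :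
  locally (x, y) (fun q : R * R => ex_derive (fun t => f t (snd q)) (fst q)) ->
  ex_derive (fun t => f x t) y -> cont2 (px f) x y ->
  differentiable_pt_lim f x y (px f x y) (py f x y).
Proof.
  intros Hx Hy Hc. apply filterdiff_differentiable_pt_lim.
  eapply filterdiff_ext_lin.
  - apply (is_derive_filterdiff f x y (px f)); [|exact (Derive_correct _ _ Hy)|exact Hc].
    refine (filter_imp _ _ _ Hx). intros q Hq. exact (Derive_correct _ _ Hq).
  - intros q. reflexivity.
Qed.

Lemma C2_on_differentiable (U : R * R -> Prop) (u : R -> R -> R) (x y : R) :
  open U -> C2_on U u -> U (x, y) ->
  differentiable_pt_lim u x y (px u x y) (py u x y) /\
  differentiable_pt_lim (px u) x y (px (px u) x y) (py (px u) x y) /\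
  differentiable_pt_lim (py u) x y (px (py u) x y) (py (py u) x y).
Proof.
  intros HU Hu Hxy.
  assert (Hloc : locally (x, y) (fun q : R * R => U (fst q, snd q))).
  { refine (filter_imp _ _ _ (HU _ Hxy)). now intros [a b]. }
  pose proof (Hu x y Hxy) as (_ & Ey & _ & Exy & _ & Eyy & _ & Cx & _ & Cxx & _ & Cyx & _).
  repeat split; apply differentiable_pt_lim_partials; try assumption;
    refine (filter_imp _ _ _ Hloc); intros q Hq; apply (Hu _ _ Hq).
Qed.

Lemma continuity_2d_pt_partial (U : R * R -> Prop) (u : R -> R -> R) (x y : R) :
  C2_on U u -> U (x, y) ->
  continuity_2d_pt u x y /\ continuity_2d_pt (px u) x y /\ continuity_2d_pt (py u) x y /\
  continuity_2d_pt (px (px u)) x y /\ continuity_2d_pt (py (px u)) x y /\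
  continuity_2d_pt (px (py u)) x y /\ continuity_2d_pt (py (py u)) x y.
Proof.
  intros Hu Hxy.
  destruct (Hu x y Hxy) as (_ & _ & _ & _ & _ & _ & C & Cx & Cy & Cxx & Cyx & Cxy & Cyy).
  repeat split; apply continuity_2d_pt_filterlim; assumption.
Qed.

Lemma is_derive_line (f : R -> R -> R) (x y a b t lx ly : R) :
  differentiable_pt_lim f (x + t * a) (y + t * b) lx ly ->
  is_derive (fun s => f (x + s * a) (y + s * b)) t (lx * a + ly * b).
Proof.
  intros Hf. apply is_derive_Reals.
  apply (derivable_pt_lim_comp_2d f (fun s => x + s * a) (fun s => y + s * b)); [exact Hf| |];
    apply is_derive_Reals; auto_derive; trivial; ring.
Qed.

Lemma C2_on_is_jet2 (U : R * R -> Prop) (u : R -> R -> R) (x y : R) :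
  open U -> C2_on U u -> U (x, y) -> is_jet2 u x y (dform u x y) (hess u x y).
Proof.
  intros HU Hu Hxy a b.
  exists (fun t => dform u (x + t * a) (y + t * b) a b). split; [|split].
  - refine (filter_imp _ _ _ (locally_2d_line _ _ _ a b (open_locally_2d U x y HU Hxy))).
    intros t Ht.
    exact (is_derive_line _ _ _ _ _ _ _ _ (proj1 (C2_on_differentiable U u _ _ HU Hu Ht))).
  - unfold dform. now rewrite !Rmult_0_l, !Rplus_0_r.
  - destruct (C2_on_differentiable U u x y HU Hu Hxy) as (_ & Dx & Dy).
    assert (Dx0 : differentiable_pt_lim (px u) (x + 0 * a) (y + 0 * b)
                    (px (px u) x y) (py (px u) x y))
      by now rewrite !Rmult_0_l, !Rplus_0_r.
    assert (Dy0 : differentiable_pt_lim (py u) (x + 0 * a) (y + 0 * b)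
                    (px (py u) x y) (py (py u) x y))
      by now rewrite !Rmult_0_l, !Rplus_0_r.
    exact (is_derive_plus _ _ _ _ _
             (is_derive_scal_l _ _ _ a (is_derive_line _ _ _ _ _ _ _ _ Dx0))
             (is_derive_scal_l _ _ _ b (is_derive_line _ _ _ _ _ _ _ _ Dy0))).
Qed.

Lemma clamp_lipschitz (a b x x' : R) :
  Rabs (Rmax a (Rmin b x) - Rmax a (Rmin b x')) <= Rabs (x - x').
Proof.
  unfold Rmax, Rmin. repeat destruct Rle_dec; unfold Rabs; repeat destruct Rcase_abs; lra.
Qed.

Lemma continuity_2d_pt_rect_min (f : R -> R -> R) (a b c d : R) :
  a <= b -> c <= d ->
  (forall x y, a <= x <= b -> c <= y <= d -> continuity_2d_pt f x y) ->
  exists x0 y0, a <= x0 <= b /\ c <= y0 <= d /\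
    forall x y, a <= x <= b -> c <= y <= d -> f x0 y0 <= f x y.
Proof.
  intros Hab Hcd Hf.
  set (clamp x := Rmax a (Rmin b x)).
  assert (Hclamp : forall x, a <= clamp x <= b).
  { intros x. unfold clamp, Rmax, Rmin. repeat destruct Rle_dec; lra. }
  (* minimise first in y on each vertical segment, then in x; clamping makes the
     slice minimum a function that is continuous on all of R *)
  assert (Hslice : forall x, {y | c <= y <= d /\
      forall y', c <= y' <= d -> f (clamp x) y <= f (clamp x) y'}).
  { intros x. apply constructive_indefinite_description.
    destruct (continuity_ab_min (f (clamp x)) c d Hcd) as [y [Hmin Hy]]; [|now exists y].
    intros y Hy. apply continuity_pt_locally. intros eps.
    exact (locally_2d_1d_const_x _ _ _ (Hf _ _ (Hclamp x) Hy eps)). }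
  set (g x := f (clamp x) (proj1_sig (Hslice x))).
  destruct (continuity_ab_min g a b Hab) as [x0 [Hmin Hx0]].
  - intros x _. apply continuity_pt_locally. intros eps.
    destruct (uniform_continuity_2d f a b c d Hf eps) as [delta Hdelta].
    exists delta. intros u Hu. change (Rabs (u - x) < delta) in Hu.
    unfold g. destruct (Hslice u) as [yu [Hyu Hminu]], (Hslice x) as [yx [Hyx Hminx]]; simpl.
    assert (Hc : Rabs (clamp u - clamp x) < delta)
      by exact (Rle_lt_trans _ _ _ (clamp_lipschitz a b u x) Hu).
    assert (H0 : Rabs (yx - yx) < delta) by (rewrite Rminus_eq_0, Rabs_R0; apply cond_pos).
    assert (H0' : Rabs (yu - yu) < delta) by (rewrite Rminus_eq_0, Rabs_R0; apply cond_pos).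
    pose proof (Hdelta _ _ _ _ (Hclamp x) Hyx (Hclamp u) Hyx Hc H0) as Hux.
    rewrite <- Rabs_Ropp, Ropp_minus_distr in Hc.
    pose proof (Hdelta _ _ _ _ (Hclamp u) Hyu (Hclamp x) Hyu Hc H0') as Hxu.
    pose proof (Hminu yx Hyx). pose proof (Hminx yu Hyu).
    apply Rabs_lt_between in Hux, Hxu. apply Rabs_lt_between. lra.
  - assert (Hid : forall x, a <= x <= b -> clamp x = x).
    { intros x Hx. unfold clamp, Rmax, Rmin. repeat destruct Rle_dec; lra. }
    exists x0, (proj1_sig (Hslice x0)). split; [exact Hx0|].
    split; [exact (proj1 (proj2_sig (Hslice x0)))|].
    intros x y Hx Hy.
    pose proof (Hmin x Hx) as Hgx. pose proof (proj2 (proj2_sig (Hslice x)) y Hy) as Hy'.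
    unfold g in Hgx. set (y0 := proj1_sig (Hslice x0)) in Hgx |- *.
    set (yx := proj1_sig (Hslice x)) in Hgx, Hy'.
    rewrite (Hid x0 Hx0), (Hid x Hx) in Hgx. rewrite (Hid x Hx) in Hy'. lra.
Qed.

Lemma exists_factor_gt (C k : R) : 0 < k -> exists g, 1 <= g /\ C < g * k.
Proof.
  intros Hk. exists (1 + Rabs C / k).
  assert (0 <= Rabs C / k) by (apply Rdiv_le_0_compat; [apply Rabs_pos|lra]).
  split; [lra|].
  replace ((1 + Rabs C / k) * k) with (k + Rabs C) by (field; lra).
  pose proof (Rle_abs C). lra.
Qed.

Lemma continuity_2d_pt_gt (f : R -> R -> R) (x y a : R) :
  continuity_2d_pt f x y -> a < f x y -> locally_2d (fun u v => a < f u v) x y.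
Proof.
  intros Hf Ha. assert (He : 0 < f x y - a) by lra.
  destruct (Hf (mkposreal _ He)) as [d Hd].
  exists d. intros u v Hu Hv. specialize (Hd u v Hu Hv). simpl in Hd.
  apply Rabs_lt_between in Hd. lra.
Qed.

(** * The maximal surface operator *)

(* For the quadratic form [H] of a matrix [A] this is tr(a(P) A), where
   a(P) = (1 - |P|^2) I + P P^T is the coefficient matrix of the maximal surface
   equation in non-divergence form at the gradient P = (p, q). *)
Definition maximal_op (p q : R) (H : R -> R -> R) : R :=
  (1 - p ^ 2 - q ^ 2) * (H 1 0 + H 0 1) + H p q.

Lemma maximal_op_qform (p q a11 a12 a21 a22 : R) :
  maximal_op p q (qform a11 a12 a21 a22) =
  (1 - q ^ 2) * a11 + p * q * (a12 + a21) + (1 - p ^ 2) * a22.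
Proof. unfold maximal_op, qform. ring. Qed.

Lemma maximal_op_lin (p q c : R) (H1 H2 H3 : R -> R -> R) :
  maximal_op p q (fun a b => H1 a b - H2 a b - c * H3 a b) =
  maximal_op p q H1 - maximal_op p q H2 - c * maximal_op p q H3.
Proof. unfold maximal_op. ring. Qed.

Lemma maximal_op_nonneg (p q : R) (H : R -> R -> R) :
  p ^ 2 + q ^ 2 <= 1 -> 0 <= H 1 0 -> 0 <= H 0 1 -> 0 <= H p q -> 0 <= maximal_op p q H.
Proof. intros. unfold maximal_op. nra. Qed.

Lemma abs_le_1_of_sq_sum (p q : R) : p ^ 2 + q ^ 2 <= 1 -> Rabs p <= 1 /\ Rabs q <= 1.
Proof.
  intros H. rewrite <- Rabs_R1. apply triangle_rectangle_le. unfold Rsqr. lra.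
Qed.

Lemma sq_lipschitz (p p' : R) :
  Rabs p <= 1 -> Rabs p' <= 1 -> Rabs (p ^ 2 - p' ^ 2) <= 2 * Rabs (p - p').
Proof.
  intros Hp Hp'. replace (p ^ 2 - p' ^ 2) with ((p - p') * (p + p')) by ring.
  rewrite Rabs_mult, (Rmult_comm 2). apply Rmult_le_compat_l; [apply Rabs_pos|].
  pose proof (Rabs_triang p p'). lra.
Qed.

Lemma mult_lipschitz (p q p' q' : R) :
  Rabs q <= 1 -> Rabs p' <= 1 -> Rabs (p * q - p' * q') <= Rabs (p - p') + Rabs (q - q').
Proof.
  intros Hq Hp'. replace (p * q - p' * q') with ((p - p') * q + p' * (q - q')) by ring.
  eapply Rle_trans; [apply Rabs_triang|]. rewrite !Rabs_mult.
  pose proof (Rabs_pos (p - p')). pose proof (Rabs_pos (q - q')). nra.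
Qed.

Lemma maximal_op_qform_lipschitz (p q p' q' a11 a12 a21 a22 : R) :
  Rabs p <= 1 -> Rabs q <= 1 -> Rabs p' <= 1 -> Rabs q' <= 1 ->
  Rabs (maximal_op p' q' (qform a11 a12 a21 a22) - maximal_op p q (qform a11 a12 a21 a22))
  <= 2 * (Rabs (p - p') + Rabs (q - q')) * (Rabs a11 + Rabs a12 + Rabs a21 + Rabs a22).
Proof.
  intros Hp Hq Hp' Hq'. rewrite !maximal_op_qform.
  replace (_ - _) with ((q ^ 2 - q' ^ 2) * a11 + (p' * q' - p * q) * (a12 + a21)
                        + (p ^ 2 - p' ^ 2) * a22) by ring.
  pose proof (sq_lipschitz q q' Hq Hq'). pose proof (sq_lipschitz p p' Hp Hp').
  pose proof (mult_lipschitz p' q' p q Hq' Hp).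
  rewrite (Rabs_minus_sym p'), (Rabs_minus_sym q') in *.
  pose proof (Rabs_triang a12 a21).
  pose proof (Rabs_triang ((q ^ 2 - q' ^ 2) * a11 + (p' * q' - p * q) * (a12 + a21))
                          ((p ^ 2 - p' ^ 2) * a22)).
  pose proof (Rabs_triang ((q ^ 2 - q' ^ 2) * a11) ((p' * q' - p * q) * (a12 + a21))).
  rewrite !Rabs_mult in *.
  pose proof (Rabs_pos (p - p')). pose proof (Rabs_pos (q - q')). pose proof (Rabs_pos a11).
  pose proof (Rabs_pos a12). pose proof (Rabs_pos a21). pose proof (Rabs_pos a22).
  pose proof (Rabs_pos (q ^ 2 - q' ^ 2)). pose proof (Rabs_pos (p ^ 2 - p' ^ 2)).
  pose proof (Rabs_pos (p' * q' - p * q)). pose proof (Rabs_pos (a12 + a21)).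
  nra.
Qed.

Lemma singular_term_lipschitz (alpha p q p' q' v v' c0 : R) :
  0 < c0 -> c0 <= v -> c0 <= v' -> p ^ 2 + q ^ 2 <= 1 -> p' ^ 2 + q' ^ 2 <= 1 ->
  Rabs (alpha * (1 - p ^ 2 - q ^ 2) / v - alpha * (1 - p' ^ 2 - q' ^ 2) / v')
  <= Rabs alpha * (2 * (Rabs (p - p') + Rabs (q - q')) / c0 + Rabs (v - v') / c0 ^ 2).
Proof.
  intros Hc0 Hv Hv' Hs Hs'.
  destruct (abs_le_1_of_sq_sum p q Hs) as [Hp Hq].
  destruct (abs_le_1_of_sq_sum p' q' Hs') as [Hp' Hq'].
  replace (_ - _) with (alpha * ((p' ^ 2 - p ^ 2 + (q' ^ 2 - q ^ 2)) * / v
                                 + (1 - p' ^ 2 - q' ^ 2) * (v' - v) * / (v * v')))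
    by (field; lra).
  rewrite Rabs_mult. apply Rmult_le_compat_l; [apply Rabs_pos|].
  eapply Rle_trans; [apply Rabs_triang|]. apply Rplus_le_compat.
  - rewrite Rabs_mult, Rabs_inv, (Rabs_pos_eq v) by lra. unfold Rdiv.
    apply Rmult_le_compat; try apply Rabs_pos.
    + left. apply Rinv_0_lt_compat. lra.
    + pose proof (sq_lipschitz p' p Hp' Hp). pose proof (sq_lipschitz q' q Hq' Hq).
      rewrite (Rabs_minus_sym p'), (Rabs_minus_sym q') in *.
      pose proof (Rabs_triang (p' ^ 2 - p ^ 2) (q' ^ 2 - q ^ 2)). lra.
    + apply Rinv_le_contravar; lra.
  - rewrite !Rabs_mult, Rabs_inv, (Rabs_pos_eq (v * v')), (Rabs_pos_eq (1 - p' ^ 2 - q' ^ 2))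
      by nra.
    rewrite Rabs_minus_sym. unfold Rdiv.
    pose proof (Rabs_pos (v - v')).
    apply Rmult_le_compat; [nra | left; apply Rinv_0_lt_compat; nra | nra |].
    apply Rinv_le_contravar; nra.
Qed.

Lemma maximal_op_solutions_gap (alpha c0 M p q p' q' v v' a11 a12 a21 a22 : R)
    (A : R -> R -> R) :
  0 < c0 -> c0 <= v -> c0 <= v' -> p ^ 2 + q ^ 2 <= 1 -> p' ^ 2 + q' ^ 2 <= 1 ->
  Rabs a11 + Rabs a12 + Rabs a21 + Rabs a22 <= M ->
  maximal_op p q A = alpha * (1 - p ^ 2 - q ^ 2) / v ->
  maximal_op p' q' (qform a11 a12 a21 a22) = alpha * (1 - p' ^ 2 - q' ^ 2) / v' ->
  maximal_op p q A - maximal_op p q (qform a11 a12 a21 a22)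
  <= (2 * Rabs alpha / c0 + 2 * M) * (Rabs (p - p') + Rabs (q - q'))
     + Rabs alpha / c0 ^ 2 * Rabs (v - v').
Proof.
  intros Hc0 Hv Hv' Hs Hs' HM HA HB.
  destruct (abs_le_1_of_sq_sum p q Hs) as [Hp Hq].
  destruct (abs_le_1_of_sq_sum p' q' Hs') as [Hp' Hq'].
  pose proof (singular_term_lipschitz alpha p q p' q' v v' c0 Hc0 Hv Hv' Hs Hs') as Hsing.
  pose proof (maximal_op_qform_lipschitz p q p' q' a11 a12 a21 a22 Hp Hq Hp' Hq') as Hlip.
  rewrite <- HA, <- HB in Hsing.
  pose proof (Rle_abs (maximal_op p q A - maximal_op p' q' (qform a11 a12 a21 a22))).
  pose proof (Rle_abs (maximal_op p' q' (qform a11 a12 a21 a22)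
                       - maximal_op p q (qform a11 a12 a21 a22))).
  pose proof (Rabs_pos (p - p')). pose proof (Rabs_pos (q - q')).
  pose proof (Rabs_pos alpha).
  assert (2 * (Rabs (p - p') + Rabs (q - q')) * (Rabs a11 + Rabs a12 + Rabs a21 + Rabs a22)
          <= 2 * (Rabs (p - p') + Rabs (q - q')) * M) by (apply Rmult_le_compat_l; lra).
  replace ((2 * Rabs alpha / c0 + 2 * M) * (Rabs (p - p') + Rabs (q - q'))
           + Rabs alpha / c0 ^ 2 * Rabs (v - v'))
    with (Rabs alpha * (2 * (Rabs (p - p') + Rabs (q - q')) / c0 + Rabs (v - v') / c0 ^ 2)
          + 2 * (Rabs (p - p') + Rabs (q - q')) * M) by (field; lra).
  lra.
Qed.

Lemma Derive_div_sqrt (f g : R -> R) (x : R) :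
  ex_derive f x -> ex_derive g x -> f x ^ 2 + g x ^ 2 < 1 ->
  Derive (fun t => f t / sqrt (1 - f t ^ 2 - g t ^ 2)) x =
  (Derive f x * (1 - g x ^ 2) + f x * g x * Derive g x) / sqrt (1 - f x ^ 2 - g x ^ 2) ^ 3.
Proof.
  intros Hf Hg Hs.
  set (s := 1 - f x ^ 2 - g x ^ 2).
  assert (Hpos : 0 < s) by (unfold s; lra).
  assert (HW : sqrt s * sqrt s = s) by (apply sqrt_sqrt; lra).
  assert (HWpos : 0 < sqrt s) by (apply sqrt_lt_R0; lra).
  assert (Es : 1 + - (f x * (f x * 1)) + - (g x * (g x * 1)) = s) by (unfold s; ring).
  apply is_derive_unique. auto_derive; rewrite Es.
  - repeat split; try assumption; lra.
  - change (fun t => f t) with f. change (fun t => g t) with g.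
    replace (sqrt s ^ 3) with (sqrt s * sqrt s * sqrt s) by ring.
    rewrite HW. unfold s in *. field. lra.
Qed.

Lemma alpha_singular_maximal_graph_nondivergence (alpha : R) (U : R * R -> Prop)
    (u : R -> R -> R) (x y : R) :
  alpha_singular_maximal_graph alpha U u -> U (x, y) ->
  maximal_op (px u x y) (py u x y) (hess u x y) =
  alpha * (1 - px u x y ^ 2 - py u x y ^ 2) / u x y.
Proof.
  intros (_ & HC & Heq) Hxy.
  destruct (Heq x y Hxy) as (Hu & Hs & Hdiv).
  destruct (HC x y Hxy) as (_ & _ & Exx & Exy & Eyx & Eyy & _).
  unfold px at 1 in Hdiv. unfold py at 1 in Hdiv. unfold Wf in Hdiv.
  rewrite (Derive_div_sqrt (fun t => px u t y) (fun t => py u t y) x Exx Eyx Hs) in Hdiv.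
  rewrite (Derive_ext (fun t => py u x t / sqrt (1 - px u x t ^ 2 - py u x t ^ 2))
                      (fun t => py u x t / sqrt (1 - py u x t ^ 2 - px u x t ^ 2)))
    in Hdiv by (intros t; do 2 f_equal; ring).
  rewrite (Derive_div_sqrt (fun t => py u x t) (fun t => px u x t) y Eyy Exy) in Hdiv by lra.
  replace (1 - py u x y ^ 2 - px u x y ^ 2) with (1 - px u x y ^ 2 - py u x y ^ 2) in Hdiv
    by ring.
  set (s := 1 - px u x y ^ 2 - py u x y ^ 2) in *.
  assert (HWpos : 0 < sqrt s) by (apply sqrt_lt_R0; unfold s; lra).
  unfold hess. rewrite maximal_op_qform.
  replace (sqrt s ^ 3) with (sqrt s * sqrt s * sqrt s) in Hdiv by ring.
  replace (alpha * s / u x y) with (alpha / (u x y * sqrt s) * (s * sqrt s))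
    by (field; lra).
  rewrite <- Hdiv, (sqrt_sqrt s) by (unfold s; lra).
  unfold px, py. field. split; [lra | unfold s; lra].
Qed.

Definition hess_norm (u : R -> R -> R) (x y : R) : R :=
  Rabs (px (px u) x y) + Rabs (py (px u) x y) + Rabs (px (py u) x y) + Rabs (py (py u) x y).

Lemma hess_norm_nonneg (u : R -> R -> R) (x y : R) : 0 <= hess_norm u x y.
Proof.
  unfold hess_norm.
  pose proof (Rabs_pos (px (px u) x y)). pose proof (Rabs_pos (py (px u) x y)).
  pose proof (Rabs_pos (px (py u) x y)). pose proof (Rabs_pos (py (py u) x y)). lra.
Qed.

(** * The Hopf barrier *)

Definition sqdist (z1 z2 x y : R) : R := (x - z1) ^ 2 + (y - z2) ^ 2.

Lemma sqdist_nonneg (z1 z2 x y : R) : 0 <= sqdist z1 z2 x y.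
Proof. unfold sqdist. pose proof (pow2_ge_0 (x - z1)). pose proof (pow2_ge_0 (y - z2)). lra. Qed.

Lemma sqdist_continuity (z1 z2 x y : R) : continuity_2d_pt (sqdist z1 z2) x y.
Proof.
  apply (continuity_2d_pt_ext (fun u v => (u - z1) * (u - z1) + (v - z2) * (v - z2)));
    [intros; unfold sqdist; ring|].
  apply continuity_2d_pt_plus; apply continuity_2d_pt_mult; apply continuity_2d_pt_minus;
    auto using continuity_2d_pt_id1, continuity_2d_pt_id2, continuity_2d_pt_const.
Qed.

Lemma sqdist_pos (z1 z2 x y : R) : (x, y) <> (z1, z2) -> 0 < sqdist z1 z2 x y.
Proof.
  intros Hne. unfold sqdist.
  pose proof (pow2_ge_0 (x - z1)). pose proof (pow2_ge_0 (y - z2)).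
  assert (Hsq : forall a, a <> 0 -> 0 < a ^ 2).
  { intros a Ha. rewrite <- pow2_abs. apply pow_lt, Rabs_pos_lt, Ha. }
  destruct (Req_dec x z1) as [->|Hx]; [destruct (Req_dec y z2) as [->|Hy]|].
  - now contradiction Hne.
  - pose proof (Hsq (y - z2) ltac:(lra)). lra.
  - pose proof (Hsq (x - z1) ltac:(lra)). lra.
Qed.

Lemma abs_lt_of_sqdist_lt (z1 z2 x y d : R) :
  0 < d -> sqdist z1 z2 x y < d ^ 2 -> Rabs (x - z1) < d /\ Rabs (y - z2) < d.
Proof.
  intros Hd Hs. unfold sqdist in Hs.
  pose proof (pow2_ge_0 (x - z1)). pose proof (pow2_ge_0 (y - z2)).
  rewrite <- (Rabs_pos_eq d) by lra.
  split; apply Rsqr_lt_abs_0; unfold Rsqr; nra.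
Qed.

Definition barrier (g z1 z2 r2 x y : R) : R := exp (- g * sqdist z1 z2 x y) - exp (- g * r2).

Definition barrier_grad (g z1 z2 x y a b : R) : R :=
  -2 * g * ((x - z1) * a + (y - z2) * b) * exp (- g * sqdist z1 z2 x y).

Definition barrier_hess (g z1 z2 x y a b : R) : R :=
  (4 * g ^ 2 * ((x - z1) * a + (y - z2) * b) ^ 2 - 2 * g * (a ^ 2 + b ^ 2))
  * exp (- g * sqdist z1 z2 x y).

Lemma barrier_is_jet2 (g z1 z2 r2 x y : R) :
  is_jet2 (barrier g z1 z2 r2) x y (barrier_grad g z1 z2 x y) (barrier_hess g z1 z2 x y).
Proof.
  intros a b. exists (fun t => barrier_grad g z1 z2 (x + t * a) (y + t * b) a b).
  unfold barrier, barrier_grad, barrier_hess, sqdist. split; [|split].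
  - apply filter_forall. intros t. auto_derive; [exact I|].
    match goal with |- _ * exp ?X = _ * exp ?Y => replace X with Y by ring end. ring.
  - now rewrite !Rmult_0_l, !Rplus_0_r.
  - auto_derive; [exact I|].
    match goal with |- context [exp ?X] => replace X with (- g * ((x - z1) ^ 2 + (y - z2) ^ 2))
                                             by ring end.
    ring.
Qed.

Lemma maximal_op_barrier_ge (p q g delta z1 z2 x y : R) :
  0 <= g -> p ^ 2 + q ^ 2 <= 1 - delta ->
  exp (- g * sqdist z1 z2 x y) * (4 * g ^ 2 * delta * sqdist z1 z2 x y - 4 * g)
  <= maximal_op p q (barrier_hess g z1 z2 x y).
Proof.
  intros Hg Hs. unfold maximal_op, barrier_hess.
  set (E := exp (- g * sqdist z1 z2 x y)). set (e1 := x - z1). set (e2 := y - z2).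
  replace (sqdist z1 z2 x y) with (e1 ^ 2 + e2 ^ 2) by reflexivity.
  assert (HE : 0 < E) by apply exp_pos.
  match goal with |- _ <= ?op =>
    replace op with (E * (4 * g ^ 2 * ((1 - p ^ 2 - q ^ 2) * (e1 ^ 2 + e2 ^ 2)
                                       + (e1 * p + e2 * q) ^ 2)
                          - 4 * g + 2 * g * (p ^ 2 + q ^ 2))) by ring
  end.
  apply Rmult_le_compat_l; [lra|].
  assert (0 <= g ^ 2 * ((1 - p ^ 2 - q ^ 2 - delta) * (e1 ^ 2 + e2 ^ 2))).
  { apply Rmult_le_pos; [apply pow2_ge_0|]. apply Rmult_le_pos; [lra|].
    pose proof (pow2_ge_0 e1). pose proof (pow2_ge_0 e2). lra. }
  assert (0 <= g ^ 2 * (e1 * p + e2 * q) ^ 2) by (apply Rmult_le_pos; apply pow2_ge_0).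
  assert (0 <= g * (p ^ 2 + q ^ 2)).
  { apply Rmult_le_pos; [lra|]. pose proof (pow2_ge_0 p). pose proof (pow2_ge_0 q). lra. }
  nra.
Qed.

Lemma barrier_grad_axes_bound (m g z1 z2 x y r : R) :
  0 <= m -> 0 <= g -> Rabs (x - z1) <= r -> Rabs (y - z2) <= r ->
  Rabs (m * barrier_grad g z1 z2 x y 1 0) + Rabs (m * barrier_grad g z1 z2 x y 0 1)
  <= 4 * m * g * exp (- g * sqdist z1 z2 x y) * r.
Proof.
  intros Hm Hg Hx Hy. unfold barrier_grad.
  set (E := exp (- g * sqdist z1 z2 x y)). assert (HE : 0 < E) by apply exp_pos.
  replace (m * (-2 * g * ((x - z1) * 1 + (y - z2) * 0) * E))
    with (- (2 * m * g * E) * (x - z1)) by ring.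
  replace (m * (-2 * g * ((x - z1) * 0 + (y - z2) * 1) * E))
    with (- (2 * m * g * E) * (y - z2)) by ring.
  assert (Hk : 0 <= 2 * m * g * E) by (apply Rmult_le_pos; [nra|lra]).
  rewrite !Rabs_mult, !Rabs_Ropp, !(Rabs_pos_eq (2 * m * g * E)) by exact Hk. nra.
Qed.

Lemma barrier_continuity (g z1 z2 r2 x y : R) : continuity_2d_pt (barrier g z1 z2 r2) x y.
Proof.
  apply (continuity_2d_pt_minus (fun u v => exp (- g * sqdist z1 z2 u v))), continuity_2d_pt_const.
  apply (continuity_1d_2d_pt_comp exp); [apply derivable_continuous_pt, derivable_pt_exp|].
  apply (continuity_2d_pt_mult (fun _ _ => - g)), sqdist_continuity.
  apply continuity_2d_pt_const.
Qed.

Lemma exp_le_compat (a b : R) : a <= b -> exp a <= exp b.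
Proof. intros [H|<-]; [left; exact (exp_increasing _ _ H)|right; reflexivity]. Qed.

Lemma barrier_lt_1 (g z1 z2 r2 x y : R) : 0 <= g -> barrier g z1 z2 r2 x y < 1.
Proof.
  intros Hg. unfold barrier. pose proof (exp_pos (- g * r2)).
  assert (exp (- g * sqdist z1 z2 x y) <= exp 0).
  { apply exp_le_compat. pose proof (sqdist_nonneg z1 z2 x y). nra. }
  rewrite exp_0 in *. lra.
Qed.

Lemma barrier_nonpos (g z1 z2 r2 x y : R) :
  0 <= g -> r2 <= sqdist z1 z2 x y -> barrier g z1 z2 r2 x y <= 0.
Proof.
  intros Hg Hr. unfold barrier.
  assert (exp (- g * sqdist z1 z2 x y) <= exp (- g * r2)) by (apply exp_le_compat; nra).
  lra.
Qed.

(** * Comparison of two alpha-singular maximal graphs *)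

Section Comparison.
Variables (alpha : R) (U1 U2 : R * R -> Prop) (u1 u2 : R -> R -> R).
Hypotheses (Hg1 : alpha_singular_maximal_graph alpha U1 u1)
           (Hg2 : alpha_singular_maximal_graph alpha U2 u2).

Definition comparison (m g z1 z2 r2 x y : R) : R :=
  u1 x y - u2 x y - m * barrier g z1 z2 r2 x y.

Lemma comparison_is_jet2 (m g z1 z2 r2 x y : R) :
  U1 (x, y) -> U2 (x, y) ->
  is_jet2 (comparison m g z1 z2 r2) x y
    (fun a b => dform u1 x y a b - dform u2 x y a b - m * barrier_grad g z1 z2 x y a b)
    (fun a b => hess u1 x y a b - hess u2 x y a b - m * barrier_hess g z1 z2 x y a b).
Proof.
  destruct Hg1 as (HU1 & HC1 & _), Hg2 as (HU2 & HC2 & _). intros Hxy1 Hxy2.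
  apply is_jet2_minus; [apply is_jet2_minus|apply is_jet2_scal].
  - exact (C2_on_is_jet2 U1 u1 x y HU1 HC1 Hxy1).
  - exact (C2_on_is_jet2 U2 u2 x y HU2 HC2 Hxy2).
  - apply barrier_is_jet2.
Qed.

Lemma comparison_continuity (m g z1 z2 r2 x y : R) :
  U1 (x, y) -> U2 (x, y) -> continuity_2d_pt (comparison m g z1 z2 r2) x y.
Proof.
  destruct Hg1 as (_ & HC1 & _), Hg2 as (_ & HC2 & _). intros Hxy1 Hxy2.
  apply continuity_2d_pt_minus; [apply continuity_2d_pt_minus|].
  - exact (proj1 (continuity_2d_pt_partial U1 u1 x y HC1 Hxy1)).
  - exact (proj1 (continuity_2d_pt_partial U2 u2 x y HC2 Hxy2)).
  - apply (continuity_2d_pt_mult (fun _ _ => m)), barrier_continuity.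
    apply continuity_2d_pt_const.
Qed.

Lemma comparison_local_min (m g z1 z2 r2 x y : R) :
  U1 (x, y) -> U2 (x, y) -> px u1 x y ^ 2 + py u1 x y ^ 2 <= 1 ->
  locally_2d (fun u v => comparison m g z1 z2 r2 x y <= comparison m g z1 z2 r2 u v) x y ->
  px u1 x y - px u2 x y = m * barrier_grad g z1 z2 x y 1 0 /\
  py u1 x y - py u2 x y = m * barrier_grad g z1 z2 x y 0 1 /\
  m * maximal_op (px u1 x y) (py u1 x y) (barrier_hess g z1 z2 x y)
  <= maximal_op (px u1 x y) (py u1 x y) (hess u1 x y)
     - maximal_op (px u1 x y) (py u1 x y) (hess u2 x y).
Proof.
  intros Hxy1 Hxy2 Hs Hmin.
  pose proof (is_jet2_local_min _ _ _ _ _ (comparison_is_jet2 m g z1 z2 r2 x y Hxy1 Hxy2) Hmin)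
    as Hcrit.
  destruct (Hcrit 1 0) as [Hx Hxx], (Hcrit 0 1) as [Hy Hyy].
  destruct (Hcrit (px u1 x y) (py u1 x y)) as [_ Hpp].
  unfold dform in Hx, Hy. split; [lra|]. split; [lra|].
  pose proof (maximal_op_nonneg _ _
    (fun a b => hess u1 x y a b - hess u2 x y a b - m * barrier_hess g z1 z2 x y a b)
    Hs Hxx Hyy Hpp) as Hop.
  rewrite maximal_op_lin in Hop. lra.
Qed.

Lemma interior_min_absurd (c0 delta M r m g rho2 z1 z2 r2 x y : R) :
  0 < c0 -> 0 < delta -> 0 < m -> 1 <= g ->
  1 + (2 * Rabs alpha / c0 + 2 * M) * r + Rabs alpha / c0 ^ 2 < g * delta * rho2 ->
  U1 (x, y) -> U2 (x, y) -> c0 <= u2 x y ->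
  0 <= u1 x y - u2 x y <= m * exp (- g * sqdist z1 z2 x y) ->
  px u1 x y ^ 2 + py u1 x y ^ 2 <= 1 - delta -> hess_norm u2 x y <= M ->
  rho2 <= sqdist z1 z2 x y -> Rabs (x - z1) <= r -> Rabs (y - z2) <= r ->
  locally_2d (fun u v => comparison m g z1 z2 r2 x y <= comparison m g z1 z2 r2 u v) x y ->
  False.
Proof.
  intros Hc0 Hdelta Hm Hg Hgamma Hxy1 Hxy2 Hc Hgap Hs HM Hrho Hr1 Hr2 Hmin.
  destruct (comparison_local_min m g z1 z2 r2 x y Hxy1 Hxy2 ltac:(lra) Hmin) as (HP & HQ & Hop).
  set (E := exp (- g * sqdist z1 z2 x y)) in *. assert (HE : 0 < E) by apply exp_pos.
  set (C1 := 2 * Rabs alpha / c0 + 2 * M) in *. set (C2 := Rabs alpha / c0 ^ 2) in *.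
  pose proof (hess_norm_nonneg u2 x y) as HM0.
  assert (HC1 : 0 <= C1).
  { unfold C1. pose proof (Rabs_pos alpha).
    assert (0 <= Rabs alpha / c0) by (apply Rdiv_le_0_compat; lra). lra. }
  assert (HC2 : 0 <= C2) by (apply Rdiv_le_0_compat; [apply Rabs_pos|nra]).
  assert (Hgrad : Rabs (px u1 x y - px u2 x y) + Rabs (py u1 x y - py u2 x y)
                  <= 4 * m * g * E * r).
  { rewrite HP, HQ. apply barrier_grad_axes_bound; lra. }
  assert (Hlow : E * (4 * g ^ 2 * delta * rho2 - 4 * g)
                 <= maximal_op (px u1 x y) (py u1 x y) (barrier_hess g z1 z2 x y)).
  { pose proof (maximal_op_barrier_ge (px u1 x y) (py u1 x y) g delta z1 z2 x y
                 ltac:(lra) Hs) as Hb. fold E in Hb.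
    eapply Rle_trans; [|exact Hb]. apply Rmult_le_compat_l; [lra|].
    apply Rplus_le_compat_r, Rmult_le_compat_l; [|exact Hrho].
    pose proof (pow2_ge_0 g). nra. }
  assert (Hup : maximal_op (px u1 x y) (py u1 x y) (hess u1 x y)
                - maximal_op (px u1 x y) (py u1 x y) (hess u2 x y)
                <= C1 * (Rabs (px u1 x y - px u2 x y) + Rabs (py u1 x y - py u2 x y))
                   + C2 * Rabs (u1 x y - u2 x y)).
  { destruct Hg2 as (_ & _ & Hsol2). destruct (Hsol2 x y Hxy2) as (_ & Hs2 & _).
    apply (maximal_op_solutions_gap alpha c0 M); try lra; try exact HM.
    - exact (alpha_singular_maximal_graph_nondivergence alpha U1 u1 x y Hg1 Hxy1).
    - exact (alpha_singular_maximal_graph_nondivergence alpha U2 u2 x y Hg2 Hxy2). }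
  rewrite (Rabs_pos_eq (u1 x y - u2 x y)) in Hup by lra.
  (* the barrier term grows like g ^ 2, the error terms only like g *)
  assert (Hfinal : m * E * (4 * g ^ 2 * delta * rho2 - 4 * g - 4 * g * r * C1 - C2) <= 0).
  { assert (C1 * (Rabs (px u1 x y - px u2 x y) + Rabs (py u1 x y - py u2 x y))
            <= C1 * (4 * m * g * E * r)) by (apply Rmult_le_compat_l; lra).
    assert (C2 * (u1 x y - u2 x y) <= C2 * (m * E)) by (apply Rmult_le_compat_l; lra).
    nra. }
  assert (Hneg : 4 * g ^ 2 * delta * rho2 - 4 * g - 4 * g * r * C1 - C2 <= 0).
  { apply (Rmult_le_reg_l (m * E)); [nra|]. lra. }
  nra.
Qed.

Lemma boundary_min_absurd (m g x0 y0 z1 z2 : R) :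
  0 < m -> 0 < g -> 0 < sqdist z1 z2 x0 y0 -> U1 (x0, y0) -> U2 (x0, y0) ->
  px u1 x0 y0 = px u2 x0 y0 -> py u1 x0 y0 = py u2 x0 y0 ->
  (forall t, 0 < t < 1 ->
     comparison m g z1 z2 (sqdist z1 z2 x0 y0) x0 y0
     <= comparison m g z1 z2 (sqdist z1 z2 x0 y0) (x0 + t * (z1 - x0)) (y0 + t * (z2 - y0))) ->
  False.
Proof.
  intros Hm Hg HR Hp1 Hp2 Hpx Hpy Hseg.
  set (r2 := sqdist z1 z2 x0 y0) in *.
  destruct (comparison_is_jet2 m g z1 z2 r2 x0 y0 Hp1 Hp2 (z1 - x0) (z2 - y0))
    as [psi [Hd [Hpsi _]]].
  assert (Hslope : 0 <= psi 0).
  { apply (is_derive_right_min_ge0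
             (fun s => comparison m g z1 z2 r2 (x0 + s * (z1 - x0)) (y0 + s * (z2 - y0))) 0);
      [exact (locally_singleton _ _ Hd)|].
    rewrite !Rmult_0_l, !Rplus_0_r.
    exists (mkposreal 1 Rlt_0_1). intros t Ht Htpos. apply Hseg. split; [exact Htpos|].
    change (Rabs (t - 0) < 1) in Ht. rewrite Rminus_0_r in Ht.
    pose proof (Rle_abs t). lra. }
  rewrite Hpsi in Hslope. unfold dform, barrier_grad in Hslope. rewrite Hpx, Hpy in Hslope.
  replace ((x0 - z1) * (z1 - x0) + (y0 - z2) * (z2 - y0)) with (- r2) in Hslope
    by (unfold r2, sqdist; ring).
  pose proof (exp_pos (- g * r2)).
  assert (0 < m * g * r2 * exp (- g * r2)) by (repeat apply Rmult_lt_0_compat; lra).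
  fold r2 in Hslope. nra.
Qed.

Definition near_bounds (c0 delta M x y : R) : Prop :=
  U1 (x, y) /\ U2 (x, y) /\ u2 x y <= u1 x y /\ c0 <= u2 x y /\
  px u1 x y ^ 2 + py u1 x y ^ 2 <= 1 - delta /\ hess_norm u2 x y <= M.

Section Hopf.
Variables (x0 y0 r c0 delta M z1 z2 : R).
Hypotheses (Hr : 0 < r) (Hc0 : 0 < c0) (Hdelta : 0 < delta)
  (Hbounds : forall x y, Rabs (x - x0) < r -> Rabs (y - y0) < r -> near_bounds c0 delta M x y)
  (Hz1 : Rabs (z1 - x0) < r / 4) (Hz2 : Rabs (z2 - y0) < r / 4).

Let in_square (x y : R) : Prop := Rabs (x - z1) <= r / 2 /\ Rabs (y - z2) <= r / 2.

Lemma square_near_bounds (x y : R) : in_square x y -> near_bounds c0 delta M x y.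
Proof.
  intros [Hx Hy]. apply Hbounds.
  - replace (x - x0) with ((x - z1) + (z1 - x0)) by ring.
    pose proof (Rabs_triang (x - z1) (z1 - x0)). lra.
  - replace (y - y0) with ((y - z2) + (z2 - y0)) by ring.
    pose proof (Rabs_triang (y - z2) (z2 - y0)). lra.
Qed.

Lemma in_square_iff (x y : R) :
  in_square x y <-> z1 - r / 2 <= x <= z1 + r / 2 /\ z2 - r / 2 <= y <= z2 + r / 2.
Proof. unfold in_square. rewrite !Rabs_le_between. lra. Qed.

Lemma segment_in_square (t : R) :
  0 <= t <= 1 -> in_square (x0 + t * (z1 - x0)) (y0 + t * (z2 - y0)).
Proof.
  intros Ht. unfold in_square.
  replace (x0 + t * (z1 - x0) - z1) with ((1 - t) * (x0 - z1)) by ring.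
  replace (y0 + t * (z2 - y0) - z2) with ((1 - t) * (y0 - z2)) by ring.
  rewrite !Rabs_mult, (Rabs_minus_sym x0), (Rabs_minus_sym y0), Rabs_pos_eq by lra.
  pose proof (Rabs_pos (z1 - x0)). pose proof (Rabs_pos (z2 - y0)). split; nra.
Qed.

Lemma sqdist_base_lt : sqdist z1 z2 x0 y0 < (r / 2) ^ 2.
Proof.
  unfold sqdist. rewrite <- (pow2_abs (x0 - z1)), <- (pow2_abs (y0 - z2)).
  rewrite (Rabs_minus_sym x0), (Rabs_minus_sym y0).
  pose proof (Rabs_pos (z1 - x0)). pose proof (Rabs_pos (z2 - y0)). nra.
Qed.

Lemma comparison_square_min (m g r2 : R) :
  exists q1 q2, in_square q1 q2 /\
    forall x y, in_square x y -> comparison m g z1 z2 r2 q1 q2 <= comparison m g z1 z2 r2 x y.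
Proof.
  destruct (continuity_2d_pt_rect_min (comparison m g z1 z2 r2)
              (z1 - r / 2) (z1 + r / 2) (z2 - r / 2) (z2 + r / 2))
    as (q1 & q2 & Hq1 & Hq2 & Hmin); [lra|lra| |].
  - intros x y Hx Hy.
    destruct (square_near_bounds x y (proj2 (in_square_iff x y) (conj Hx Hy))) as (H1 & H2 & _).
    exact (comparison_continuity m g z1 z2 r2 x y H1 H2).
  - exists q1, q2. split; [now apply in_square_iff|].
    intros x y Hxy. apply in_square_iff in Hxy. apply Hmin; apply Hxy.
Qed.

Lemma negative_min_absurd (m g rho2 r2 q1 q2 : R) :
  0 < m -> 1 <= g ->
  1 + (2 * Rabs alpha / c0 + 2 * M) * r + Rabs alpha / c0 ^ 2 < g * delta * rho2 ->
  (forall x y, sqdist z1 z2 x y <= rho2 -> m < u1 x y - u2 x y) ->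
  r2 < (r / 2) ^ 2 -> in_square q1 q2 ->
  (forall x y, in_square x y -> comparison m g z1 z2 r2 q1 q2 <= comparison m g z1 z2 r2 x y) ->
  comparison m g z1 z2 r2 q1 q2 < 0 -> False.
Proof.
  intros Hm Hg Hgamma Hinner Hr2 Hq Hmin Hneg.
  destruct (square_near_bounds q1 q2 Hq) as (Hq1 & Hq2 & Hle & Hc & Hs & HM).
  unfold comparison in Hneg.
  assert (Hrho : rho2 <= sqdist z1 z2 q1 q2).
  { destruct (Rle_lt_dec rho2 (sqdist z1 z2 q1 q2)) as [|Hlt]; [assumption|exfalso].
    pose proof (Hinner q1 q2 (Rlt_le _ _ Hlt)).
    pose proof (barrier_lt_1 g z1 z2 r2 q1 q2 ltac:(lra)). nra. }
  assert (Hout : sqdist z1 z2 q1 q2 < r2).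
  { destruct (Rlt_le_dec (sqdist z1 z2 q1 q2) r2) as [|Hge]; [assumption|exfalso].
    pose proof (barrier_nonpos g z1 z2 r2 q1 q2 ltac:(lra) Hge). nra. }
  assert (Hgap : u1 q1 q2 - u2 q1 q2 <= m * exp (- g * sqdist z1 z2 q1 q2)).
  { unfold barrier in Hneg. pose proof (exp_pos (- g * r2)). nra. }
  destruct (abs_lt_of_sqdist_lt z1 z2 q1 q2 (r / 2) ltac:(lra) ltac:(lra)) as [Hd1 Hd2].
  set (eps := r / 2 - Rmax (Rabs (q1 - z1)) (Rabs (q2 - z2))).
  assert (Heps : 0 < eps) by (unfold eps, Rmax; destruct Rle_dec; lra).
  apply (interior_min_absurd c0 delta M r m g rho2 z1 z2 r2 q1 q2); try assumption; try lra.
  exists (mkposreal eps Heps). intros x y Hx Hy. apply Hmin. simpl in Hx, Hy.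
  unfold in_square, eps in *.
  pose proof (Rmax_l (Rabs (q1 - z1)) (Rabs (q2 - z2))).
  pose proof (Rmax_r (Rabs (q1 - z1)) (Rabs (q2 - z2))).
  replace (x - z1) with ((x - q1) + (q1 - z1)) by ring.
  replace (y - z2) with ((y - q2) + (q2 - z2)) by ring.
  pose proof (Rabs_triang (x - q1) (q1 - z1)). pose proof (Rabs_triang (y - q2) (q2 - z2)).
  split; lra.
Qed.

Lemma nonnegative_min_absurd (m g q1 q2 : R) :
  0 < m -> 0 < g -> (x0, y0) <> (z1, z2) ->
  u1 x0 y0 = u2 x0 y0 -> px u1 x0 y0 = px u2 x0 y0 -> py u1 x0 y0 = py u2 x0 y0 ->
  (forall x y, in_square x y ->
     comparison m g z1 z2 (sqdist z1 z2 x0 y0) q1 q2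
     <= comparison m g z1 z2 (sqdist z1 z2 x0 y0) x y) ->
  0 <= comparison m g z1 z2 (sqdist z1 z2 x0 y0) q1 q2 -> False.
Proof.
  intros Hm Hg Hne Htouch Hpx Hpy Hmin Hnonneg.
  assert (Hsq_p : in_square x0 y0).
  { unfold in_square. rewrite (Rabs_minus_sym x0), (Rabs_minus_sym y0). lra. }
  destruct (square_near_bounds x0 y0 Hsq_p) as (Hp1 & Hp2 & _).
  apply (boundary_min_absurd m g x0 y0 z1 z2); try assumption; [now apply sqdist_pos|].
  intros t Ht.
  replace (comparison m g z1 z2 (sqdist z1 z2 x0 y0) x0 y0) with 0
    by (unfold comparison, barrier; rewrite Htouch; ring).
  eapply Rle_trans; [exact Hnonneg|]. apply Hmin, segment_in_square. lra.
Qed.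

Lemma graphs_coincide_near :
  u1 x0 y0 = u2 x0 y0 -> px u1 x0 y0 = px u2 x0 y0 -> py u1 x0 y0 = py u2 x0 y0 ->
  u1 z1 z2 = u2 z1 z2.
Proof.
  intros Htouch Hpx Hpy.
  assert (Hsq_z : in_square z1 z2) by (unfold in_square; rewrite !Rminus_eq_0, Rabs_R0; lra).
  destruct (square_near_bounds z1 z2 Hsq_z) as (Hz1U & Hz2U & Hzle & _).
  destruct (Rle_lt_or_eq_dec _ _ Hzle) as [Hlt|Heq]; [exfalso|now symmetry].
  assert (Hne : (x0, y0) <> (z1, z2)) by (intros E; injection E as <- <-; lra).
  set (m := (u1 z1 z2 - u2 z1 z2) / 2).
  assert (Hm : 0 < m) by (unfold m; lra).
  destruct (continuity_2d_pt_gt (fun x y => u1 x y - u2 x y) z1 z2 m) as [dz Hdz].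
  { destruct Hg1 as (_ & HC1 & _), Hg2 as (_ & HC2 & _).
    apply continuity_2d_pt_minus;
      [exact (proj1 (continuity_2d_pt_partial U1 u1 z1 z2 HC1 Hz1U))
      |exact (proj1 (continuity_2d_pt_partial U2 u2 z1 z2 HC2 Hz2U))]. }
  { unfold m. lra. }
  set (rho2 := dz ^ 2 / 4).
  pose proof (cond_pos dz) as Hdz0.
  assert (Hinner : forall x y, sqdist z1 z2 x y <= rho2 -> m < u1 x y - u2 x y).
  { intros x y Hxy.
    destruct (abs_lt_of_sqdist_lt z1 z2 x y dz Hdz0) as [Hx Hy]; [unfold rho2 in Hxy; nra|].
    exact (Hdz x y Hx Hy). }
  destruct (exists_factor_gt (1 + (2 * Rabs alpha / c0 + 2 * M) * r + Rabs alpha / c0 ^ 2)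
              (delta * rho2)) as (g & Hg & Hgamma).
  { apply Rmult_lt_0_compat; [exact Hdelta | unfold rho2; nra]. }
  rewrite <- Rmult_assoc in Hgamma.
  set (r2 := sqdist z1 z2 x0 y0).
  destruct (comparison_square_min m g r2) as (q1 & q2 & Hq & Hmin).
  destruct (Rlt_le_dec (comparison m g z1 z2 r2 q1 q2) 0) as [Hneg|Hnonneg].
  - exact (negative_min_absurd m g rho2 r2 q1 q2 Hm Hg Hgamma Hinner sqdist_base_lt Hq Hmin Hneg).
  - exact (nonnegative_min_absurd m g q1 q2 Hm ltac:(lra) Hne Htouch Hpx Hpy Hmin Hnonneg).
Qed.

End Hopf.

Lemma near_bounds_locally (x0 y0 : R) :
  U1 (x0, y0) -> U2 (x0, y0) -> locally_2d (fun x y => u2 x y <= u1 x y) x0 y0 ->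
  exists c0 delta M, 0 < c0 /\ 0 < delta /\ locally_2d (near_bounds c0 delta M) x0 y0.
Proof.
  destruct Hg1 as (HU1 & HC1 & Hsol1), Hg2 as (HU2 & HC2 & Hsol2).
  intros Hp1 Hp2 Habove.
  destruct (Hsol1 x0 y0 Hp1) as (_ & Hs & _). destruct (Hsol2 x0 y0 Hp2) as (Hpos & _).
  destruct (continuity_2d_pt_partial U1 u1 x0 y0 HC1 Hp1) as (_ & Cx & Cy & _).
  destruct (continuity_2d_pt_partial U2 u2 x0 y0 HC2 Hp2) as (C & _ & _ & Cxx & Cyx & Cxy & Cyy).
  exists (u2 x0 y0 / 2), ((1 - px u1 x0 y0 ^ 2 - py u1 x0 y0 ^ 2) / 2), (hess_norm u2 x0 y0 + 1).
  split; [lra|]. split; [lra|].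
  repeat apply locally_2d_and.
  - exact (open_locally_2d U1 x0 y0 HU1 Hp1).
  - exact (open_locally_2d U2 x0 y0 HU2 Hp2).
  - exact Habove.
  - apply (locally_2d_impl (fun x y => u2 x0 y0 / 2 < u2 x y));
      [apply locally_2d_forall; intros; lra | apply continuity_2d_pt_gt; [exact C | lra]].
  - apply (locally_2d_impl (fun x y => (1 - px u1 x0 y0 ^ 2 - py u1 x0 y0 ^ 2) / 2
                                       < 1 - px u1 x y ^ 2 - py u1 x y ^ 2));
      [apply locally_2d_forall; intros; lra|].
    apply continuity_2d_pt_gt; [|lra].
    apply (continuity_2d_pt_ext (fun x y => 1 - px u1 x y * px u1 x y - py u1 x y * py u1 x y));
      [intros; ring|].
    apply continuity_2d_pt_minus; [apply continuity_2d_pt_minus|];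
      auto using continuity_2d_pt_mult, continuity_2d_pt_const.
  - apply (locally_2d_impl (fun x y => 0 < hess_norm u2 x0 y0 + 1 - hess_norm u2 x y));
      [apply locally_2d_forall; intros; lra|].
    apply continuity_2d_pt_gt; [|lra].
    apply continuity_2d_pt_minus; [apply continuity_2d_pt_const|].
    unfold hess_norm.
    repeat apply continuity_2d_pt_plus;
      apply (continuity_1d_2d_pt_comp Rabs); auto using Rcontinuity_abs.
Qed.

End Comparison.

Theorem proposition4p2 (alpha : R) (U1 U2 : R * R -> Prop)
  (u1 u2 : R -> R -> R) (x0 y0 : R) :
  alpha <> 0 ->
  alpha_singular_maximal_graph alpha U1 u1 ->
  alpha_singular_maximal_graph alpha U2 u2 ->
  U1 (x0, y0) -> U2 (x0, y0) ->
  (* common tangent point p = (x0, y0, u1 x0 y0) *)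
  u1 x0 y0 = u2 x0 y0 ->
  px u1 x0 y0 = px u2 x0 y0 ->
  py u1 x0 y0 = py u2 x0 y0 ->
  (* Sigma_1 lies above Sigma_2 around p *)
  locally (x0, y0) (fun q : R * R => u2 (fst q) (snd q) <= u1 (fst q) (snd q)) ->
  (* they coincide in an open set around p *)
  locally (x0, y0) (fun q : R * R => u1 (fst q) (snd q) = u2 (fst q) (snd q)).
Proof.
  intros _ Hg1 Hg2 Hp1 Hp2 Htouch Hpx Hpy Habove.
  apply (locally_2d_locally (fun x y => u2 x y <= u1 x y)) in Habove.
  destruct (near_bounds_locally alpha U1 U2 u1 u2 Hg1 Hg2 x0 y0 Hp1 Hp2 Habove)
    as (c0 & delta & M & Hc0 & Hdelta & [r Hbounds]).
  apply (locally_2d_locally (fun x y => u1 x y = u2 x y)).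
  assert (Hr4 : 0 < r / 4) by (generalize (cond_pos r); lra).
  exists (mkposreal _ Hr4). intros z1 z2 Hz1 Hz2.
  exact (graphs_coincide_near alpha U1 U2 u1 u2 Hg1 Hg2 x0 y0 r c0 delta M z1 z2
           (cond_pos r) Hc0 Hdelta Hbounds Hz1 Hz2 Htouch Hpx Hpy).
Qed.
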